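(* Let $(J,S)$ be a homogeneous $d$-dimensional multi-time Markov renewal chain with semi-Markov kernel $q$. Then for all $i,j\in E$, $$g_{ij}=q_{ij}+\sum_{r\in E,\ r\ne j}q_{ir}*g_{rj}.$$
   Context: $E=\{1,\dots,s\}$. Convolution of real sequences on $\mathbb{N}^d$: $[a*b](k)=\sum_{l+l'=k}a(l)b(l')$. $\mathbb{N}^d$ has the componentwise partial order, $k<l$ meaning $k\le l$, $k\ne l$. A homogeneous $d$-dimensional multi-time Markov renewal chain is a process $(J_n,S_n)_{n\in\mathbb{N}}$, $J_n\in E$, $S_n\in\mathbb{N}^d$, $S_0=0_d$, $S_n<S_{n+1}$, with a.s. $\mathbb{P}(J_{n+1}=j,S_{n+1}-S_n=k\mid J_{0:n},S_{0:n})=q_{J_nj}(k)$, $q_{ij}(k)=\mathbb{P}(J_{n+1}=j,S_{n+1}-S_n=k\mid J_n=i)$ independent of $n$. $\mathbb{P}_i$: probability given $J_0=i$. With $m_j=\min\{l\ge1:J_l=j\}$, $g_{ij}(k)=\mathbb{P}_i(S_{m_j}=k)$, $k\in\mathbb{N}^d$. *)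

From HB Require Import structures.
From mathcomp Require Import all_boot all_order all_algebra.
From mathcomp Require Import all_classical all_reals all_analysis.
Set Implicit Arguments. Unset Strict Implicit. Unset Printing Implicit Defensive.
Import Order.TTheory GRing.Theory Num.Theory.
Local Open Scope classical_set_scope.
Local Open Scope ring_scope.

Notation natvec d := {ffun 'I_d -> nat}.

Definition vle d (k l : natvec d) : Prop := forall t : 'I_d, (k t <= l t)%N.
Definition vlt d (k l : natvec d) : Prop := vle k l /\ k <> l.

Definition vzero d : natvec d := [ffun _ => 0%N].
Definition vsub d (k l : natvec d) : natvec d := [ffun t => (k t - l t)%N].

(* Convolution on N^d: [a*b](k) = sum_{l + l' = k} a(l) b(l'),
   the pairs (l, l') with l + l' = k being exactly (l, k - l) with l <= k. *)
Definition mrconv (R : pzRingType) d (a b : natvec d -> R) (k : natvec d) : R :=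
  \sum_(l : {dffun forall t : 'I_d, 'I_(k t).+1})
     a [ffun t => nat_of_ord (l t)] * b [ffun t => (k t - l t)%N].

Definition history (T : Type) s d (J : nat -> T -> 'I_s) (S : nat -> T -> natvec d)
  (n : nat) (js : nat -> 'I_s) (ss : nat -> natvec d) : set T :=
  [set w | forall m, (m <= n)%N -> J m w = js m /\ S m w = ss m].

(* (J,S) is a homogeneous d-dimensional multi-time Markov renewal chain with
   semi-Markov kernel q under the probability P (discrete form of the
   a.s. conditional-probability identity). *)
Definition is_MRC (R : realType) (dT : measure_display) (T : measurableType dT)
  (P : probability T R) s d (J : nat -> T -> 'I_s) (S : nat -> T -> natvec d)
  (q : 'I_s -> 'I_s -> natvec d -> R) : Prop :=
  [/\ forall n j, measurable [set w | J n w = j],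
      forall n k, measurable [set w | S n w = k],
      forall w, S 0%N w = vzero d,
      forall n w, vlt (S n w) (S n.+1 w) &
      forall n js ss j k,
        P (history J S n js ss `&` [set w | J n.+1 w = j /\ vsub (S n.+1 w) (S n w) = k])
        = ((q (js n) j k)%:E * P (history J S n js ss))%E].

(* The event {S_{m_j} = k}, with m_j = min {l >= 1 : J_l = j} (requires m_j finite). *)
Definition first_passage_at (T : Type) s d (J : nat -> T -> 'I_s) (S : nat -> T -> natvec d)
  (j : 'I_s) (k : natvec d) : set T :=
  [set w | exists l, [/\ (0 < l)%N, J l w = j,
                         (forall l', (0 < l')%N -> (l' < l)%N -> J l' w <> j) &
                         S l w = k]].

Definition g_fun (R : realType) (dT : measure_display) (T : measurableType dT)
  s d (P : 'I_s -> probability T R) (J : nat -> T -> 'I_s) (S : nat -> T -> natvec d)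
  (i j : 'I_s) (k : natvec d) : R :=
  fine (P i (first_passage_at J S j k)).

From HB Require Import structures.
From mathcomp Require Import all_boot all_order all_algebra.
From mathcomp Require Import all_classical all_reals all_analysis.
From mathcomp Require Import zify.
Set Implicit Arguments. Unset Strict Implicit. Unset Printing Implicit Defensive.
Import Order.TTheory GRing.Theory Num.Theory.
Local Open Scope classical_set_scope.
Local Open Scope ring_scope.

(* Truncate by the number of jumps.  Let F(N, n) be the event that, among the
   jumps n+1, ..., n+N, J first reaches j at a jump where S equals k, and let
   g^N be the iterates of the renewal equation,
     g^0 = 0,   g^(N+1)_a = q_aj + sum_(r <> j) q_ar * g^N_r.
   Splitting F(N+1, n) according to the jump n+1 (straight to j at k, or to
   some r <> j at some x <= k followed by F(N, n+1)), the kernel identity gives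
   by induction on N that P(history_n & F(N, n)) = g^N_(J_n)(k - S_n) P(history_n).
   As S is strictly increasing, the coordinate sum of S_l is at least l, so the
   first passage to k happens within |k| jumps: g_(aj)(k) = g^N_a(k) as soon as
   N > |k|, and the renewal equation for g is the recursion defining g^(N+1). *)

Lemma measure_fibers (dT : measure_display) (T : measurableType dT) (R : realType)
  (mu : {measure set T -> \bar R}) (I : finType) (V : Type) (f : T -> V) (g : I -> V)
  (A : set T) :
  injective g -> measurable A -> (forall i, measurable (f @^-1` [set g i])) ->
  A `<=` f @^-1` range g ->
  mu A = (\sum_(i : I) mu (A `&` f @^-1` [set g i]))%E.
Proof.
move=> g_inj mA mf Af.
have finI : finite_set [set: I] by exact: (@finite_finset I).
have {1}-> : A = \bigcup_(i in [set: I]) (A `&` f @^-1` [set g i]).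
  apply/seteqP; split=> [w Aw|w [i _ []//]].
  by have [i _ fw] := Af w Aw; exists i => //; split.
rewrite measure_fin_bigcup //.
- rewrite fsbig_finite //= big_uniq ?finmap.fset_uniq //.
  by apply: eq_bigl => i; rewrite in_fset_set // in_setT.
- by move=> i j _ _ [w [[_ /= ->] [_ /=]] /g_inj].
- by move=> i _; apply: measurableI.
Qed.

Lemma probability_setI_eq1 (dT : measure_display) (T : measurableType dT) (R : realType)
  (P : probability T R) (H X : set T) :
  measurable H -> measurable X -> P H = 1%E -> P (H `&` X) = P X.
Proof.
move=> mH mX PH1.
have PXH0 : P (X `\` H) = 0%E.
  apply: (subset_measure0 (measurableD mX mH) (measurableC mH)) => [w []//|].
  by have := probability_setC P mH; rewrite PH1 subee.
have -> : P X = (P (X `\` H) + P (X `&` H))%E := measureDI P mX mH.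
by rewrite PXH0 add0e setIC.
Qed.

Section NatVec.
Variable d : nat.

Definition vadd (a b : natvec d) : natvec d := [ffun t => (a t + b t)%N].

Definition vec_of (k : natvec d) (l : {dffun forall t : 'I_d, 'I_(k t).+1}) : natvec d :=
  [ffun t => nat_of_ord (l t)].

Lemma vec_of_inj (k : natvec d) : injective (@vec_of k).
Proof.
move=> l l' /ffunP eq_ll'; apply/ffunP => t; apply/val_inj.
by have := eq_ll' t; rewrite !ffunE.
Qed.

Lemma vec_ofP (k x : natvec d) : vle x k -> exists l, @vec_of k l = x.
Proof.
move=> xk; exists [ffun t => inord (x t) : 'I_(k t).+1].
by apply/ffunP => t; rewrite !ffunE inordK // ltnS.
Qed.

Lemma vaddK (b x : natvec d) : vsub (vadd b x) b = x.
Proof. by apply/ffunP => t; rewrite !ffunE addKn. Qed.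

Lemma vsub_vadd_vec_of (k b m : natvec d) (l : {dffun forall t : 'I_d, 'I_(m t).+1}) :
  vsub k (vadd b (vec_of l)) = [ffun t => (vsub k b t - l t)%N].
Proof. by apply/ffunP => t; rewrite !ffunE subnDA. Qed.

Lemma vle_vaddr (b x : natvec d) : vle b (vadd b x).
Proof. by move=> t; rewrite ffunE leq_addr. Qed.

Lemma vsubK (b x : natvec d) : vle b x -> vadd b (vsub x b) = x.
Proof. by move=> bx; apply/ffunP => t; rewrite !ffunE subnKC. Qed.

Lemma vadd_vec_of_le (k b : natvec d) (l : {dffun forall t : 'I_d, 'I_(vsub k b t).+1}) :
  vle b k -> vle (vadd b (vec_of l)) k.
Proof.
move=> bk t; have kbt : vsub k b t = (k t - b t)%N by rewrite ffunE.
have lkb : (l t <= k t - b t)%N by rewrite -kbt -ltnS ltn_ord.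
by rewrite !ffunE -(subnKC (bk t)) leq_add2l.
Qed.

Lemma vle_trans : forall a b c : natvec d, vle a b -> vle b c -> vle a c.
Proof. by move=> a b c ab bc t; exact: leq_trans (ab t) (bc t). Qed.

Lemma vlt_weight (a b : natvec d) : vlt a b -> (\sum_t a t < \sum_t b t)%N.
Proof.
move=> [ab neq_ab].
have [t abt] : exists t, (a t < b t)%N.
  case: (pickP (fun t => (a t < b t)%N)) => [t abt|eq_ab]; first by exists t.
  case: neq_ab; apply/ffunP => t; apply/eqP.
  by rewrite eqn_leq ab /= leqNgt eq_ab.
rewrite (bigD1 t) //= [X in (_ < X)%N](bigD1 t) //= -addSn leq_add //.
exact: leq_sum.
Qed.

End NatVec.

Section History.
Variables (T : Type) (s d : nat) (J : nat -> T -> 'I_s) (S : nat -> T -> natvec d).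

Lemma history0 js ss : history J S 0 js ss = [set w | J 0%N w = js 0%N /\ S 0%N w = ss 0%N].
Proof.
apply/seteqP; split => w /=; first by apply.
by move=> h m; rewrite leqn0 => /eqP ->.
Qed.

Lemma history_extend n js ss r x :
  history J S n.+1 (fun m => if m == n.+1 then r else js m)
                   (fun m => if m == n.+1 then x else ss m)
  = history J S n js ss `&` [set w | J n.+1 w = r /\ S n.+1 w = x].
Proof.
apply/seteqP; split => w /= hw.
  split; last by have := hw n.+1 (leqnn _); rewrite eqxx.
  by move=> m mn; have := hw m (leqW mn); rewrite ltn_eqF.
case: hw => hw hn m; rewrite leq_eqVlt ltnS; case: eqP => [-> _ //| _ /= mn].
exact: hw.
Qed.

Fixpoint first_passage_within (j : 'I_s) (k : natvec d) (N m : nat) : set T :=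
  if N is N'.+1 then
    [set w | J m.+1 w = j /\ S m.+1 w = k] `|`
    ([set w | J m.+1 w <> j] `&` first_passage_within j k N' m.+1)
  else set0.

Lemma first_passage_withinP j k N m w :
  first_passage_within j k N m w <->
  exists l, [/\ (m < l <= m + N)%N, J l w = j,
              (forall l', (m < l' < l)%N -> J l' w <> j) & S l w = k].
Proof.
elim: N m => [|N IH] m /=.
  by split => [//|[l [ml _ _ _]]]; lia.
split.
- case=> [[Jj Sk]|[Jn /IH [l [ml Jl hl Sl]]]].
    by exists m.+1; split => // [|l']; lia.
  exists l; split => //; first by lia.
  by move=> l' ml'; case: (eqVneq l' m.+1) => [->//|ne]; apply: hl; lia.
- move=> [l [ml Jl hl Sl]]; case: (eqVneq l m.+1) => [e|ne].
    by left; rewrite -e.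
  right; split; first by apply: hl; lia.
  by apply/IH; exists l; split => // [|l' ml']; [lia | apply: hl; lia].
Qed.

Hypothesis S_incr : forall n w, vlt (S n w) (S n.+1 w).

Lemma first_passage_within_le j k N m w :
  first_passage_within j k N m w -> vle (S m w) k.
Proof.
elim: N m => [|N IH] m //= [[_ <-]|[_ /IH]]; exact: vle_trans (S_incr _ _).1.
Qed.

Lemma first_passage_at_within j (k : natvec d) N : (\sum_t k t < N)%N ->
  first_passage_at J S j k = first_passage_within j k N 0.
Proof.
have weight_ge l w : (l <= \sum_t S l w t)%N.
  by elim: l => [//|l IH]; exact: leq_ltn_trans IH (vlt_weight (S_incr l w)).
move=> kN; apply/seteqP; split => w /=.
  move=> [l [l0 Jl hl Sl]]; apply/first_passage_withinP.
  exists l; split => // [|l' /andP[/hl]//].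
  by have := weight_ge l w; rewrite Sl; lia.
move/first_passage_withinP => [l [/andP[l0 _] Jl hl Sl]]; exists l; split => //.
by move=> l' l'0 l'l; apply: hl; rewrite l'0.
Qed.

End History.

Section Measurability.
Variables (dT : measure_display) (T : measurableType dT) (s d : nat).
Variables (J : nat -> T -> 'I_s) (S : nat -> T -> natvec d).
Hypotheses (mJ : forall n j, measurable [set w | J n w = j])
           (mS : forall n k, measurable [set w | S n w = k]).

Lemma measurable_jump n j k : measurable [set w | J n w = j /\ S n w = k].
Proof. exact: measurableI (mJ n j) (mS n k). Qed.

Lemma measurable_history n js ss : measurable (history J S n js ss).
Proof.
by apply: bigcap_measurable => [|m _]; [exists 0%N | exact: measurable_jump].
Qed.

Lemma measurable_first_passage_within j k N m :
  measurable (first_passage_within J S j k N m).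
Proof.
elim: N m => [|N IH] m /=; first exact: measurable0.
apply: measurableU; first exact: measurable_jump.
exact: measurableI (measurableC (mJ _ _)) (IH _).
Qed.

End Measurability.

Fixpoint g_trunc (R : pzRingType) (s d : nat) (q : 'I_s -> 'I_s -> natvec d -> R)
    (j : 'I_s) (N : nat) : 'I_s -> natvec d -> R :=
  if N is N'.+1 then
    fun a x => q a j x + \sum_(r < s | r != j) mrconv (q a r) (g_trunc q j N' r) x
  else fun _ _ => 0.

Lemma g_truncS (R : pzRingType) (s d : nat) (q : 'I_s -> 'I_s -> natvec d -> R) j N a x :
  g_trunc q j N.+1 a x = q a j x + \sum_(r < s | r != j) mrconv (q a r) (g_trunc q j N r) x.
Proof. by []. Qed.

Section MarkovRenewal.
Variables (R : realType) (dT : measure_display) (T : measurableType dT).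
Variables (P : probability T R) (s d : nat).
Variables (J : nat -> T -> 'I_s) (S : nat -> T -> natvec d) (q : 'I_s -> 'I_s -> natvec d -> R).
Hypothesis MRC : is_MRC P J S q.

Let mJ : forall n j, measurable [set w | J n w = j]. Proof. by case: MRC. Qed.
Let mS : forall n k, measurable [set w | S n w = k]. Proof. by case: MRC. Qed.
Let S_incr : forall n w, vlt (S n w) (S n.+1 w). Proof. by case: MRC. Qed.

Lemma history_jump n js ss r x : vle (ss n) x ->
  P (history J S n js ss `&` [set w | J n.+1 w = r /\ S n.+1 w = x]) =
  ((q (js n) r (vsub x (ss n)))%:E * P (history J S n js ss))%E.
Proof.
case: MRC => _ _ _ _ kernel snx; rewrite -kernel; congr (P _).
apply/seteqP; split => w /= [hw [Jr Sx]]; have Sn := (hw n (leqnn n)).2.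
  by rewrite Sx Sn.
split=> //; split=> //; apply/ffunP => t; move/ffunP: Sx => /(_ t); rewrite !ffunE -Sn.
have := (S_incr n w).1 t; rewrite Sn => snS.
by move/(congr1 (addn (ss n t))); rewrite !subnKC.
Qed.

Variables (j : 'I_s) (k : natvec d).

(* [vsub] truncates, hence the restriction to histories with [ss n <= k]. *)
Definition passage_law N := forall n js ss, vle (ss n) k ->
  P (history J S n js ss `&` first_passage_within J S j k N n) =
  ((g_trunc q j N (js n) (vsub k (ss n)))%:E * P (history J S n js ss))%E.

Lemma passage_law0 : passage_law 0.
Proof. by move=> n js ss _; rewrite /= setI0 measure0 mul0e. Qed.

Lemma jump_then_passage N : passage_law N -> forall n js ss r x,
  vle (ss n) x -> vle x k ->
  P (history J S n js ss `&` [set w | J n.+1 w = r /\ S n.+1 w = x]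
       `&` first_passage_within J S j k N n.+1) =
  ((g_trunc q j N r (vsub k x) * q (js n) r (vsub x (ss n)))%:E
     * P (history J S n js ss))%E.
Proof.
move=> law n js ss r x snx xk.
by rewrite -history_extend law /= eqxx // history_extend history_jump // muleA EFinM.
Qed.

Lemma miss_decomposition N n js ss :
  P (history J S n js ss `&` ([set w | J n.+1 w <> j] `&` first_passage_within J S j k N n.+1)) =
  (\sum_(l : {dffun forall t, 'I_(vsub k (ss n) t).+1}) \sum_(r < s | r != j)
     P (history J S n js ss `&` [set w | J n.+1 w = r /\ S n.+1 w = vadd (ss n) (vec_of l)]
          `&` first_passage_within J S j k N n.+1))%E.
Proof.
pose jump_to (p : {dffun forall t, 'I_(vsub k (ss n) t).+1} * 'I_s) :=
  (vadd (ss n) (vec_of p.1), p.2).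
have jump_to_inj : injective jump_to.
  move=> [l r] [l' r'] [/(congr1 (fun y => vsub y (ss n)))].
  by rewrite !vaddK => /vec_of_inj -> ->.
rewrite (measure_fibers P (f := fun w => (S n.+1 w, J n.+1 w)) jump_to_inj); first last.
- move=> w [Hw [_ Fw]]; have snS : vle (ss n) (S n.+1 w).
    by rewrite -(Hw n (leqnn n)).2; case: (S_incr n w).
  have [|l xl] := @vec_ofP _ (vsub k (ss n)) (vsub (S n.+1 w) (ss n)).
    by move=> t; rewrite !ffunE leq_sub2r // (first_passage_within_le S_incr Fw).
  by exists (l, J n.+1 w) => //; rewrite /jump_to /= xl vsubK.
- move=> [l r]; have -> : (fun w => (S n.+1 w, J n.+1 w)) @^-1` [set jump_to (l, r)] =
      [set w | S n.+1 w = vadd (ss n) (vec_of l)] `&` [set w | J n.+1 w = r].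
    by apply/seteqP; split => w /= [-> ->].
  exact: measurableI (mS _ _) (mJ _ _).
- apply: measurableI (measurable_history mJ mS n js ss) (measurableI _ _ _ _).
    exact: measurableC (mJ _ _).
  exact: measurable_first_passage_within.
rewrite pair_big [RHS]big_mkcond; apply: eq_bigr => -[l r] _ /=.
case: eqVneq => [->|rj] /=.
  rewrite (_ : _ `&` _ = set0) ?measure0 //.
  by apply/seteqP; split => w // [[_ []]] /= + _ [_ Jr].
congr (P _); apply/seteqP; split => w /=; first by move=> [[Hw [_ Fw]] [Sx Jr]].
by move=> [[Hw [Jr Sx]] Fw]; rewrite Jr Sx; split => //; split => //; split => //; exact/eqP.
Qed.

Lemma passage_after_miss N : passage_law N -> forall n js ss, vle (ss n) k ->
  P (history J S n js ss `&` ([set w | J n.+1 w <> j] `&` first_passage_within J S j k N n.+1)) =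
  ((\sum_(r < s | r != j) mrconv (q (js n) r) (g_trunc q j N r) (vsub k (ss n)))%:E
     * P (history J S n js ss))%E.
Proof.
move=> law n js ss snk; set H := history J S n js ss.
have PHE : P H = (fine (P H))%:E.
  by rewrite fineK // fin_num_measure //; exact: measurable_history.
rewrite miss_decomposition.
transitivity (\sum_(l : {dffun forall t, 'I_(vsub k (ss n) t).+1}) \sum_(r < s | r != j)
    (q (js n) r (vec_of l) * g_trunc q j N r [ffun t => (vsub k (ss n) t - l t)%N]
      * fine (P H))%:E)%E.
  apply: eq_bigr => l _; apply: eq_bigr => r _.
  rewrite jump_then_passage //; [|exact: vle_vaddr|exact: vadd_vec_of_le].
  by rewrite -/H {1}PHE -EFinM vsub_vadd_vec_of vaddK [_ * q _ _ _]mulrC.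
under eq_bigr do rewrite sumEFin.
rewrite sumEFin [in RHS]PHE -EFinM; congr EFin.
rewrite exchange_big big_distrl /=; apply: eq_bigr => r _.
by rewrite /mrconv big_distrl.
Qed.

Lemma passage_lawS N : passage_law N -> passage_law N.+1.
Proof.
move=> law n js ss snk; have mH := measurable_history mJ mS n js ss.
set H := history J S n js ss; set hit := [set w | J n.+1 w = j /\ S n.+1 w = k].
set miss := [set w | J n.+1 w <> j] `&` first_passage_within J S j k N n.+1.
have mhit : measurable (H `&` hit) := measurableI _ _ mH (measurable_jump mJ mS _ _ _).
have mmiss : measurable (H `&` miss).
  apply: measurableI mH (measurableI _ _ (measurableC (mJ _ _)) _).
  exact: measurable_first_passage_within.
have -> : P (H `&` first_passage_within J S j k N.+1 n) = (P (H `&` hit) + P (H `&` miss))%E.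
  rewrite -measureU // -?setIUr //.
  by apply/seteqP; split => w // [[_ [Jj _]] [_ [Jn _]]].
rewrite /H /hit /miss history_jump // passage_after_miss //.
by rewrite EFinD muleDl // fin_num_measure.
Qed.

Lemma passage_lawP N : passage_law N.
Proof. by elim: N => [|N]; [exact: passage_law0 | exact: passage_lawS]. Qed.

End MarkovRenewal.

Lemma g_fun_trunc (R : realType) (dT : measure_display) (T : measurableType dT)
    (s d : nat) (P : 'I_s -> probability T R)
    (J : nat -> T -> 'I_s) (S : nat -> T -> natvec d) (q : 'I_s -> 'I_s -> natvec d -> R) :
  (forall i, P i [set w | J 0%N w = i] = 1%E) -> (forall i, is_MRC (P i) J S q) ->
  forall a j (x : natvec d) N, (\sum_t x t < N)%N ->
  g_fun P J S a j x = g_trunc q j N a x.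
Proof.
move=> P_start MRC a j x N xN; have [mJ mS S0 S_incr _] := MRC a.
have start : history J S 0 (fun=> a) (fun=> vzero d) = [set w | J 0%N w = a].
  by rewrite history0; apply/seteqP; split => w /= [] // Ja; split; rewrite ?S0.
rewrite /g_fun (first_passage_at_within J S_incr j xN).
rewrite -(probability_setI_eq1 (measurable_history mJ mS 0 (fun=> a) (fun=> vzero d))).
- rewrite (passage_lawP (MRC a)) /= ?start ?P_start ?mule1; last by move=> t; rewrite ffunE.
  by congr (g_trunc _ _ _ _ _); apply/ffunP => t; rewrite !ffunE subn0.
- exact: measurable_first_passage_within.
- by rewrite start P_start.
Qed.

Theorem proposition11 (R : realType) (dT : measure_display) (T : measurableType dT)
  (s d : nat) (P : 'I_s -> probability T R)
  (J : nat -> T -> 'I_s) (S : nat -> T -> natvec d)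
  (q : 'I_s -> 'I_s -> natvec d -> R) :
  (forall i : 'I_s, P i [set w | J 0%N w = i] = 1%E) ->
  (forall i : 'I_s, is_MRC (P i) J S q) ->
  forall (i j : 'I_s) (k : natvec d),
    g_fun P J S i j k
    = q i j k + \sum_(r < s | r != j) mrconv (q i r) (g_fun P J S r j) k.
Proof.
move=> P_start MRC i j k.
have kN : (\sum_t k t < (\sum_t k t).+2)%N by [].
rewrite (g_fun_trunc P_start MRC i j kN) g_truncS.
congr (_ + _); apply: eq_bigr => r _; apply: eq_bigr => l _; congr (_ * _).
apply/esym/g_fun_trunc => //; rewrite ltnS; apply: leq_sum => t _.
by rewrite ffunE leq_subr.
Qed.
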